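(* Let $\mathbb{T}$ be a time scale and $\alpha\in(0,1]$. Let $g:\mathbb{T}\to\mathbb{R}$ be strictly increasing, suppose $\tilde{\mathbb{T}}:=\mathrm{Ran}(g)$ is a time scale, and suppose $g$ is nabla fractional differentiable of order $\alpha$ at $t\in\mathbb{T}^k$. If $f:\tilde{\mathbb{T}}\to\mathbb{R}$ is continuously nabla fractional differentiable of order $1$ at each point of $\tilde{\mathbb{T}}^k$, then $$\nabla^{(\alpha)}(f\circ g)(t)=\big(\nabla^{(1)}f\big)(g(t))\cdot\nabla^{(\alpha)}g(t),$$ where $\nabla^{(1)}f$ is computed on the time scale $\tilde{\mathbb{T}}$.
   Context: A time scale is a nonempty closed subset of $\mathbb{R}$ with the relative topology. On a time scale $\mathbb{S}$, for $t\in\mathbb{S}$: $\rho(t)=\sup\{s\in\mathbb{S}:s<t\}$, $\sigma(t)=\inf\{s\in\mathbb{S}:s>t\}$, $\nu(t)=t-\rho(t)$. If $\mathbb{S}$ has a minimum $m$ with $\sigma(m)>m$ then $\mathbb{S}^k=\mathbb{S}\setminus\{m\}$, else $\mathbb{S}^k=\mathbb{S}$. $U_\delta(t)=(t-\delta,t+\delta)\cap\mathbb{S}$, $U^-_\delta(t)=(t-\delta,t)\cap\mathbb{S}$. Let $Q=\{1/q: q \text{ an odd positive integer}\}$; for $\alpha\in Q$, $x^\alpha$ is the real $q$-th root. Definition: $h:\mathbb{S}\to\mathbb{R}$ is nabla fractional differentiable of order $\alpha$ at $t\in\mathbb{S}^k$ if there is $L\in\mathbb{R}$ such that for every $\varepsilon>0$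 there is $\delta>0$ with $|[h(\rho(t))-h(s)]-L[\rho(t)-s]^\alpha|\le\varepsilon|\rho(t)-s|^\alpha$ for all $s\in U_\delta(t)$ if $\alpha\in Q$, resp. all $s\in U^-_\delta(t)$ if $\alpha\notin Q$; then $\nabla^{(\alpha)}h(t):=L$. ''Continuously nabla fractional differentiable of order $1$ at each point of $\tilde{\mathbb{T}}^k$'' means $f$ is nabla fractional differentiable of order $1$ at every point of $\tilde{\mathbb{T}}^k$ and $\nabla^{(1)}f$ is continuous there. *)

From Stdlib Require Import Reals Lra.
From Coquelicot Require Import Coquelicot.
Open Scope R_scope.

Definition closed_set (S : R -> Prop) : Prop :=
  forall x, (forall eps, 0 < eps -> exists s, S s /\ Rabs (s - x) < eps) -> S x.
Definition time_scale (S : R -> Prop) : Prop := (exists x, S x) /\ closed_set S.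

(* rho(t) = sup {s in S | s < t}, with sup of empty set = t (= inf S). *)
Definition rho (S : R -> Prop) (t : R) : R :=
  match Lub_Rbar (fun s => S s /\ s < t) with Finite r => r | _ => t end.
(* sigma(t) = inf {s in S | s > t}, with inf of empty set = t (= sup S). *)
Definition sigma (S : R -> Prop) (t : R) : R :=
  match Glb_Rbar (fun s => S s /\ t < s) with Finite r => r | _ => t end.

Definition Sk (S : R -> Prop) (t : R) : Prop :=
  S t /\ ~ ((forall s, S s -> t <= s) /\ t < sigma S t).

Definition inQ (a : R) : Prop := exists q : nat, Nat.odd q = true /\ a = / INR q.

(* x^a: for x > 0 the usual power; for x < 0 (only used when a in Q, a = 1/q,
   q odd) the real q-th root -(-x)^a; 0^a = 0. *)
Definition powQ (a x : R) : R :=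
  if Rlt_dec 0 x then Rpower x a
  else if Rlt_dec x 0 then - Rpower (- x) a else 0.
Definition pow_nn (a x : R) : R := if Rlt_dec 0 x then Rpower x a else 0.

Definition nabla_frac (S : R -> Prop) (a : R) (h : R -> R) (t L : R) : Prop :=
  Sk S t /\
  forall eps, 0 < eps -> exists delta, 0 < delta /\
    (inQ a -> forall s, S s -> t - delta < s < t + delta ->
       Rabs ((h (rho S t) - h s) - L * powQ a (rho S t - s))
         <= eps * pow_nn a (Rabs (rho S t - s))) /\
    (~ inQ a -> forall s, S s -> t - delta < s < t ->
       Rabs ((h (rho S t) - h s) - L * powQ a (rho S t - s))
         <= eps * pow_nn a (Rabs (rho S t - s))).

Definition range_on (T : R -> Prop) (g : R -> R) : R -> Prop :=
  fun y => exists x, T x /\ g x = y.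

From Pilot Require Import Defs.
From Stdlib Require Import Reals Lra Classical.
From Coquelicot Require Import Coquelicot.
Open Scope R_scope.

(* The nabla estimate at t only tests admissible points s: all s near t when alpha is
   in Q, only s < t otherwise.  When alpha is not in Q and t is left-scattered, no
   admissible point is near t and the estimate is vacuous.  Otherwise
   g (rho t) - g t = Lg (rho t - t)^alpha exactly, so the estimate makes g continuous
   at t along the admissible points.  Hence the strictly increasing g carries the left
   neighbourhood of t onto that of g t in the range: the backward jump of the range at
   g t is g (rho t), and g t lies in its S^k.  Composing the order-1 estimate of f at
   g t, taken at y = g s, with the order-alpha estimate of g at t gives the chain rule. *)

Definition continuous_within (D : R -> Prop) (h : R -> R) (t : R) : Prop :=
  forall eps, 0 < eps -> exists delta, 0 < delta /\
    forall s, D s -> t - delta < s < t + delta -> Rabs (h s - h t) < eps.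

Lemma continuous_within_of_continuous D h t :
  continuous h t -> continuous_within D h t.
Proof.
  intros Hc eps Heps.
  destruct (proj1 (filterlim_locally h (h t)) Hc (mkposreal eps Heps)) as [d Hd].
  exists d; split; [apply cond_pos|].
  intros s _ Hs. apply (Hd s). change (Rabs (s - t) < d).
  apply Rabs_def1; lra.
Qed.

Lemma continuous_within_sub (D1 D2 : R -> Prop) h t :
  continuous_within D2 h t -> (forall s, D1 s -> D2 s) -> continuous_within D1 h t.
Proof.
  intros Hcont Hsub eps Heps. destruct (Hcont eps Heps) as [delta [Hdelta Hclose]].
  exists delta. split; [exact Hdelta|]. intros s Hs. now apply Hclose, Hsub.
Qed.

Lemma powQ_pos a x : 0 < x -> powQ a x = Rpower x a.
Proof. intros Hx. unfold powQ. destruct (Rlt_dec 0 x); [reflexivity | lra]. Qed.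

Lemma powQ_0 a : powQ a 0 = 0.
Proof.
  unfold powQ. destruct (Rlt_dec 0 0); [lra|]. destruct (Rlt_dec 0 0); [lra | reflexivity].
Qed.

Lemma powQ_opp a x : powQ a (- x) = - powQ a x.
Proof.
  unfold powQ.
  destruct (Rlt_dec 0 x), (Rlt_dec 0 (- x)), (Rlt_dec x 0), (Rlt_dec (- x) 0);
    rewrite ?Ropp_involutive; try lra.
Qed.

Lemma powQ_1 x : powQ 1 x = x.
Proof.
  unfold powQ. destruct (Rlt_dec 0 x); [apply Rpower_1; lra|].
  destruct (Rlt_dec x 0); [rewrite Rpower_1 by lra|]; lra.
Qed.

Lemma pow_nn_1 z : 0 <= z -> pow_nn 1 z = z.
Proof. intros Hz. unfold pow_nn. destruct (Rlt_dec 0 z); [apply Rpower_1|]; lra. Qed.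

Lemma Rabs_powQ a x : Rabs (powQ a x) = pow_nn a (Rabs x).
Proof.
  assert (Hpos : forall y, 0 < y -> Rabs (powQ a y) = pow_nn a y).
  { intros y Hy. rewrite powQ_pos by exact Hy. unfold pow_nn.
    destruct (Rlt_dec 0 y); [apply Rabs_pos_eq, Rlt_le, exp_pos | lra]. }
  destruct (Rtotal_order 0 x) as [Hx|[<-|Hx]].
  - rewrite (Rabs_pos_eq x) by lra. now apply Hpos.
  - rewrite powQ_0, Rabs_R0. unfold pow_nn. destruct (Rlt_dec 0 0); [lra | reflexivity].
  - rewrite (Rabs_left x), <- (Ropp_involutive x) at 1 by lra.
    rewrite powQ_opp, Rabs_Ropp. apply Hpos. lra.
Qed.

Lemma Rpower_continuous a x : 0 < x -> continuous (fun y => Rpower y a) x.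
Proof.
  intros Hx. apply continuity_pt_filterlim, derivable_continuous_pt.
  exists (a * Rpower x (a - 1)). now apply derivable_pt_lim_power.
Qed.

Lemma powQ_continuous a x : 0 < a -> continuous (powQ a) x.
Proof.
  intros Ha.
  assert (Hpos : forall y, 0 < y -> continuous (powQ a) y).
  { intros y Hy. apply continuous_ext_loc with (fun z => Rpower z a).
    - exists (mkposreal y Hy). intros z Hz. change (Rabs (z - y) < y) in Hz. apply Rabs_def2 in Hz.
      symmetry. apply powQ_pos. lra.
    - now apply Rpower_continuous. }
  destruct (Rtotal_order 0 x) as [Hx|[<-|Hx]].
  - now apply Hpos.
  - (* [|y|^a < eps] as soon as [|y| < eps^(1/a)] *)
    apply filterlim_locally. intros eps.
    exists (mkposreal (Rpower eps (/ a)) (exp_pos _)). intros y Hy.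
    change (Rabs (powQ a y - powQ a 0) < eps). change (Rabs (y - 0) < Rpower eps (/ a)) in Hy.
    rewrite powQ_0, !Rminus_0_r, Rabs_powQ in *. unfold pow_nn.
    destruct (Rlt_dec 0 (Rabs y)); [|apply cond_pos].
    rewrite <- (Rpower_1 eps), <- (Rinv_l a), <- Rpower_mult by (lra || apply cond_pos).
    apply Rlt_Rpower_l; lra.
  - apply continuous_ext with (fun y => - powQ a (- y)).
    { intros y. now rewrite powQ_opp, Ropp_involutive. }
    apply (continuous_opp (fun y => powQ a (- y))).
    apply (continuous_comp Ropp (powQ a)).
    + apply (continuous_opp (fun y : R => y)), continuous_id.
    + apply Hpos. lra.
Qed.

Definition left_dense (S : R -> Prop) (t : R) : Prop :=
  forall d, 0 < d -> exists s, S s /\ t - d < s < t.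
Definition right_dense (S : R -> Prop) (t : R) : Prop :=
  forall d, 0 < d -> exists s, S s /\ t < s < t + d.

Lemma rho_empty S t : ~ (exists s, S s /\ s < t) -> rho S t = t.
Proof.
  intros Hnone. unfold rho.
  rewrite (is_lub_Rbar_unique _ m_infty); [reflexivity|].
  split; [|now intros b _; destruct b].
  intros s Hs. exfalso. now apply Hnone; exists s.
Qed.

Lemma rho_lub S t : (exists s, S s /\ s < t) ->
  is_lub_Rbar (fun s => S s /\ s < t) (rho S t).
Proof.
  intros [s0 Hs0]. unfold rho.
  destruct (Lub_Rbar_correct (fun s => S s /\ s < t)) as [Hub Hleast].
  destruct (Lub_Rbar _) as [r| |]; [now split| |].
  - exfalso. apply (Hleast t). intros s [_ Hs]. simpl. lra.
  - exfalso. exact (Hub s0 Hs0).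
Qed.

Lemma rho_ub S t s : S s -> s < t -> s <= rho S t.
Proof. intros Hs Hst. exact (proj1 (rho_lub S t (ex_intro _ s (conj Hs Hst))) s (conj Hs Hst)). Qed.

Lemma rho_le S t : rho S t <= t.
Proof.
  destruct (classic (exists s, S s /\ s < t)) as [Hleft|Hnone].
  - apply (proj2 (rho_lub S t Hleft) t). intros s [_ Hs]. simpl. lra.
  - rewrite rho_empty by exact Hnone. lra.
Qed.

Lemma rho_approx S t eps : (exists s, S s /\ s < t) -> 0 < eps ->
  exists s, S s /\ s < t /\ rho S t - eps < s.
Proof.
  intros Hleft Heps. apply NNPP. intros Hnone.
  assert (Hle : rho S t <= rho S t - eps).
  { apply (proj2 (rho_lub S t Hleft) (rho S t - eps)). intros s [Hs Hst]. simpl.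
    apply Rnot_lt_le. intros Hlt. apply Hnone. now exists s. }
  lra.
Qed.

Lemma rho_mem S t : Defs.closed_set S -> rho S t < t -> S (rho S t).
Proof.
  intros Hclosed Hlt.
  assert (Hleft : exists s, S s /\ s < t).
  { apply NNPP. intros Hnone. rewrite rho_empty in Hlt by exact Hnone. lra. }
  apply (Hclosed (rho S t)). intros eps Heps.
  destruct (rho_approx S t eps Hleft Heps) as [s [Hs [Hst Hclose]]].
  exists s. split; [exact Hs|].
  assert (s <= rho S t) by (apply rho_ub; assumption).
  rewrite Rabs_left1; lra.
Qed.

Lemma rho_of_max S t r : S r -> r < t -> (forall s, S s -> s < t -> s <= r) -> rho S t = r.
Proof.
  intros Hr Hrt Hmax. apply Rle_antisym; [|now apply rho_ub].
  apply (proj2 (rho_lub S t (ex_intro _ r (conj Hr Hrt))) r).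
  intros s [Hs Hst]. exact (Hmax s Hs Hst).
Qed.

Lemma left_dense_iff S t : (exists s, S s /\ s < t) ->
  (~ rho S t < t <-> left_dense S t).
Proof.
  intros Hleft. split.
  - intros Hrho d Hd.
    destruct (rho_approx S t d Hleft Hd) as [s [Hs [Hst Hclose]]].
    exists s. split; [exact Hs | lra].
  - intros Hdense Hlt.
    destruct (Hdense (t - rho S t)) as [s [Hs Hst]]; [lra|].
    assert (s <= rho S t) by (apply rho_ub; tauto). lra.
Qed.

Lemma sigma_empty S t : ~ (exists s, S s /\ t < s) -> Defs.sigma S t = t.
Proof.
  intros Hnone. unfold Defs.sigma.
  rewrite (is_glb_Rbar_unique _ p_infty); [reflexivity|].
  split; [|now intros b _; destruct b].
  intros s Hs. exfalso. now apply Hnone; exists s.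
Qed.

Lemma sigma_glb S t : (exists s, S s /\ t < s) ->
  is_glb_Rbar (fun s => S s /\ t < s) (Defs.sigma S t).
Proof.
  intros [s0 Hs0]. unfold Defs.sigma.
  destruct (Glb_Rbar_correct (fun s => S s /\ t < s)) as [Hlb Hgreatest].
  destruct (Glb_Rbar _) as [r| |]; [now split| |].
  - exfalso. exact (Hlb s0 Hs0).
  - exfalso. apply (Hgreatest t). intros s [_ Hs]. simpl. lra.
Qed.

Lemma right_dense_iff S t : (exists s, S s /\ t < s) ->
  (~ t < Defs.sigma S t <-> right_dense S t).
Proof.
  intros Hright. destruct (sigma_glb S t Hright) as [Hlb Hgreatest]. split.
  - intros Hsigma d Hd. apply NNPP. intros Hnone.
    enough (t + d <= Defs.sigma S t) by lra.
    apply (Hgreatest (t + d)). intros s [Hs Hts]. simpl.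
    apply Rnot_lt_le. intros Hlt. apply Hnone. exists s. split; [exact Hs | lra].
  - intros Hdense Hlt.
    destruct (Hdense (Defs.sigma S t - t)) as [s [Hs Hts]]; [lra|].
    assert (Hle := Hlb s (conj Hs (proj1 Hts))). simpl in Hle. lra.
Qed.

Definition strictly_increasing_on (T : R -> Prop) (g : R -> R) : Prop :=
  forall x y, T x -> T y -> x < y -> g x < g y.

Section MonotoneImage.

Variables (T : R -> Prop) (g : R -> R) (t : R).
Hypothesis g_incr : strictly_increasing_on T g.
Hypothesis T_t : T t.

Lemma incr_lt_reflect x y : T x -> T y -> g x < g y -> x < y.
Proof.
  intros Hx Hy Hlt. apply Rnot_le_lt. intros [Hyx|<-]; [|lra].
  pose proof (g_incr y x Hy Hx Hyx). lra.
Qed.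

Lemma incr_le x y : T x -> T y -> x <= y -> g x <= g y.
Proof. intros Hx Hy [Hxy|<-]; [left; now apply g_incr | lra]. Qed.

Lemma left_dense_range :
  continuous_within (fun s => T s /\ s < t) g t ->
  left_dense T t -> left_dense (range_on T g) (g t).
Proof.
  intros Hcont Hdense d Hd.
  destruct (Hcont d Hd) as [d' [Hd' Hclose]].
  destruct (Hdense d' Hd') as [s [Hs Hst]].
  exists (g s). split; [now exists s|].
  assert (g s < g t) by (apply g_incr; tauto).
  assert (Habs : Rabs (g s - g t) < d) by (apply Hclose; [tauto | lra]).
  apply Rabs_def2 in Habs. lra.
Qed.

Lemma right_dense_range :
  continuous_within (fun s => T s /\ t < s) g t ->
  right_dense T t -> right_dense (range_on T g) (g t).
Proof.
  intros Hcont Hdense d Hd.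
  destruct (Hcont d Hd) as [d' [Hd' Hclose]].
  destruct (Hdense d' Hd') as [s [Hs Hts]].
  exists (g s). split; [now exists s|].
  assert (g t < g s) by (apply g_incr; tauto).
  assert (Habs : Rabs (g s - g t) < d) by (apply Hclose; [tauto | lra]).
  apply Rabs_def2 in Habs. lra.
Qed.

Lemma rho_range :
  Defs.closed_set T ->
  continuous_within (fun s => T s /\ s < t) g t ->
  rho (range_on T g) (g t) = g (rho T t).
Proof.
  intros Hclosed Hcont.
  destruct (classic (exists s, T s /\ s < t)) as [Hleft|Hnone].
  2:{ rewrite (rho_empty T t Hnone). apply rho_empty.
      intros [y [[x [Hx <-]] Hxt]]. apply Hnone. exists x.
      split; [exact Hx | now apply incr_lt_reflect]. }
  destruct (Rlt_or_le (rho T t) t) as [Hscattered|Hge].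
  - assert (Hrho : T (rho T t)) by now apply rho_mem.
    apply rho_of_max; [now exists (rho T t) | now apply g_incr|].
    intros y [x [Hx <-]] Hxt. apply incr_le; [exact Hx | exact Hrho|].
    apply rho_ub; [exact Hx | now apply incr_lt_reflect].
  - assert (Hrho : rho T t = t) by (apply Rle_antisym; [apply rho_le | exact Hge]).
    rewrite Hrho.
    assert (Hdense : left_dense (range_on T g) (g t)).
    { apply left_dense_range; [exact Hcont|]. apply left_dense_iff; [exact Hleft | lra]. }
    destruct (Hdense 1 Rlt_0_1) as [y [Hy Hyt]].
    apply Rle_antisym; [apply rho_le|]. apply Rnot_lt_le.
    apply left_dense_iff; [exists y; split; [exact Hy | lra] | exact Hdense].
Qed.

Lemma Sk_range :
  Sk T t ->
  ((forall s, T s -> t <= s) -> continuous_within (fun s => T s /\ t < s) g t) ->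
  Sk (range_on T g) (g t).
Proof.
  intros [_ Hnot_scattered] Hcont.
  split; [now exists t|]. intros [Hmin Hscattered].
  assert (Tmin : forall s, T s -> t <= s).
  { intros s Hs. apply Rnot_lt_le. intros Hst.
    pose proof (g_incr s t Hs T_t Hst).
    pose proof (Hmin (g s) (ex_intro _ s (conj Hs eq_refl))). lra. }
  destruct (classic (exists y, range_on T g y /\ g t < y)) as [Hright|Hnone].
  - destruct Hright as [y [[x [Hx <-]] Htx]].
    assert (Hxt : t < x) by now apply incr_lt_reflect.
    assert (Hdense : right_dense T t).
    { apply right_dense_iff; [now exists x|]. intros Hlt. now apply Hnot_scattered. }
    revert Hscattered. apply right_dense_iff.
    { exists (g x). split; [now exists x | now apply g_incr]. }
    now apply right_dense_range; [apply Hcont|].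
  - rewrite sigma_empty in Hscattered by exact Hnone. lra.
Qed.

End MonotoneImage.

Definition nabla_bound (S : R -> Prop) (a : R) (h : R -> R) (t L : R) : Prop :=
  forall eps, 0 < eps -> exists delta, 0 < delta /\
    forall s, S s -> t - delta < s < t + delta -> (inQ a \/ s < t) ->
      Rabs ((h (rho S t) - h s) - L * powQ a (rho S t - s))
        <= eps * pow_nn a (Rabs (rho S t - s)).

Lemma nabla_frac_iff S a h t L :
  nabla_frac S a h t L <-> Sk S t /\ nabla_bound S a h t L.
Proof.
  split; intros [HSk Hbound]; split; try exact HSk; intros eps Heps;
    destruct (Hbound eps Heps) as [delta [Hdelta Hest]]; exists delta; split; auto.
  - destruct Hest as [HinQ HnotQ]. intros s Hs Hwin [Ha|Hst].
    + now apply HinQ.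
    + destruct (classic (inQ a)) as [Ha|Ha]; [now apply HinQ | apply HnotQ; auto; lra].
  - split; intros Ha s Hs Hwin; apply Hest; auto; lra.
Qed.

Lemma nabla_bound_vacuous S a h t L :
  ~ inQ a -> ~ left_dense S t -> nabla_bound S a h t L.
Proof.
  intros HnotQ Hscattered eps _.
  apply not_all_ex_not in Hscattered as [delta Hdelta].
  apply imply_to_and in Hdelta as [Hdelta Hnone].
  exists delta. split; [exact Hdelta|].
  intros s Hs Hwin [Ha|Hst]; [contradiction|].
  exfalso. apply Hnone. exists s. split; [exact Hs | lra].
Qed.

Lemma eq0_of_Rabs_le_eps_mult X c :
  (forall eps, 0 < eps -> Rabs X <= eps * c) -> X = 0.
Proof.
  intros Hsmall. apply Rabs_eq_0, Rle_antisym; [|apply Rabs_pos].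
  apply Rle_plus_epsilon. intros eps Heps.
  pose proof (Rabs_pos c). pose proof (Rle_abs c).
  apply Rle_trans with (eps / (Rabs c + 1) * c); [apply Hsmall; apply Rdiv_lt_0_compat; lra|].
  apply Rle_trans with (eps / (Rabs c + 1) * (Rabs c + 1));
    [apply Rmult_le_compat_l; [apply Rlt_le, Rdiv_lt_0_compat|]; lra|].
  right. field. lra.
Qed.

Lemma nabla_bound_center S a h t L :
  S t -> inQ a \/ left_dense S t -> nabla_bound S a h t L ->
  h (rho S t) - h t = L * powQ a (rho S t - t).
Proof.
  intros Ht [Ha|Hdense] Hbound.
  - apply Rminus_diag_uniq, (eq0_of_Rabs_le_eps_mult _ (pow_nn a (Rabs (rho S t - t)))).
    intros eps Heps. destruct (Hbound eps Heps) as [delta [Hdelta Hest]].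
    apply Hest; [exact Ht | lra | now left].
  - destruct (Hdense 1 Rlt_0_1) as [s [Hs Hst]].
    assert (Hrho : rho S t = t).
    { apply Rle_antisym; [apply rho_le|]. apply Rnot_lt_le.
      apply left_dense_iff; [exists s; split; [exact Hs | lra] | exact Hdense]. }
    rewrite Hrho, !Rminus_diag, powQ_0. ring.
Qed.

Lemma nabla_bound_continuous S a h t L :
  0 < a ->
  h (rho S t) - h t = L * powQ a (rho S t - t) ->
  nabla_bound S a h t L ->
  continuous_within (fun s => S s /\ (inQ a \/ s < t)) h t.
Proof.
  intros Ha Hcenter Hbound eta Heta.
  set (p := rho S t) in *.
  set (c := Rabs (powQ a (p - t)) + 1).
  set (K := Rabs L + 1).
  pose proof (Rabs_pos (powQ a (p - t))). pose proof (Rabs_pos L).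
  set (e := eta / (2 * c)). assert (He : e * c = eta / 2) by (unfold e, c; field; lra).
  set (r := eta / (2 * K)). assert (Hr : r * K = eta / 2) by (unfold r, K; field; lra).
  destruct (continuous_within_of_continuous (fun _ => True) (powQ a) (p - t)
              (powQ_continuous a (p - t) Ha) (Rmin 1 r))
    as [d1 [Hd1 Hpow]]; [apply Rmin_pos; [lra | unfold r, K; apply Rdiv_lt_0_compat; lra]|].
  destruct (Hbound e) as [d2 [Hd2 Hest]]; [unfold e, c; apply Rdiv_lt_0_compat; lra|].
  exists (Rmin d1 d2). split; [now apply Rmin_pos|].
  intros s [Hs Hadm] Hwin.
  pose proof (Rmin_l d1 d2). pose proof (Rmin_r d1 d2).
  pose proof (Rmin_l 1 r). pose proof (Rmin_r 1 r).
  assert (Hdiff : Rabs (powQ a (p - s) - powQ a (p - t)) < Rmin 1 r)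
    by (apply Hpow; [exact I | lra]).
  assert (Hfar : Rabs ((h p - h s) - L * powQ a (p - s)) <= e * Rabs (powQ a (p - s)))
    by (rewrite Rabs_powQ; apply Hest; [exact Hs | lra | exact Hadm]).
  assert (Hps : Rabs (powQ a (p - s)) <= c).
  { pose proof (Rabs_triang_inv (powQ a (p - s)) (powQ a (p - t))). unfold c. lra. }
  assert (He0 : 0 <= e) by (apply Rlt_le; unfold e, c; apply Rdiv_lt_0_compat; lra).
  pose proof (Rabs_pos (powQ a (p - s) - powQ a (p - t))).
  replace (h s - h t)
    with (L * (powQ a (p - t) - powQ a (p - s)) - ((h p - h s) - L * powQ a (p - s))) by lra.
  eapply Rle_lt_trans; [apply Rabs_triang|].
  rewrite Rabs_Ropp, Rabs_mult, Rabs_minus_sym. unfold K in Hr. nra.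
Qed.

Lemma inQ_1 : inQ 1.
Proof. exists 1%nat. split; [reflexivity | simpl; now rewrite Rinv_1]. Qed.

Lemma Rabs_chain_bound X Y P D L e1 e2 :
  0 <= e1 ->
  Rabs (Y - D * X) <= e1 * Rabs X ->
  Rabs (X - L * P) <= e2 * Rabs P ->
  Rabs (Y - D * L * P) <= (e1 * (Rabs L + e2) + Rabs D * e2) * Rabs P.
Proof.
  intros He1 HY HX.
  assert (HXP : Rabs X <= (Rabs L + e2) * Rabs P).
  { replace X with ((X - L * P) + L * P) at 1 by ring.
    eapply Rle_trans; [apply Rabs_triang|]. rewrite Rabs_mult. lra. }
  replace (Y - D * L * P) with ((Y - D * X) + D * (X - L * P)) by ring.
  eapply Rle_trans; [apply Rabs_triang|]. rewrite Rabs_mult.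
  pose proof (Rmult_le_compat_l _ _ _ He1 HXP).
  pose proof (Rmult_le_compat_l _ _ _ (Rabs_pos D) HX). nra.
Qed.

Lemma chain_coefficients L D eps : 0 < eps ->
  exists e1 e2, 0 < e1 /\ 0 < e2 /\ e1 * (Rabs L + e2) + Rabs D * e2 <= eps.
Proof.
  intros Heps. pose proof (Rabs_pos L). pose proof (Rabs_pos D).
  set (e2 := eps / (2 * (Rabs D + 1))).
  assert (He2 : 0 < e2) by (apply Rdiv_lt_0_compat; lra).
  exists (eps / (2 * (Rabs L + e2))), e2.
  split; [apply Rdiv_lt_0_compat; lra|]. split; [exact He2|].
  assert (Rabs D * e2 <= eps / 2).
  { unfold e2. apply Rle_trans with ((Rabs D + 1) * (eps / (2 * (Rabs D + 1))));
      [apply Rmult_le_compat_r; [apply Rlt_le, He2 | lra] | right; field; lra]. }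
  replace (eps / (2 * (Rabs L + e2)) * (Rabs L + e2)) with (eps / 2) by (field; lra). lra.
Qed.

Lemma nabla_bound_comp (T S : R -> Prop) a g f t Lg D :
  (forall s, T s -> S (g s)) ->
  rho S (g t) = g (rho T t) ->
  continuous_within (fun s => T s /\ (inQ a \/ s < t)) g t ->
  nabla_bound T a g t Lg ->
  nabla_bound S 1 f (g t) D ->
  nabla_bound T a (fun x => f (g x)) t (D * Lg).
Proof.
  intros HgS Hrho Hcont Hg Hf eps Heps.
  destruct (chain_coefficients Lg D eps Heps) as [e1 [e2 [He1 [He2 Hsum]]]].
  destruct (Hf e1 He1) as [df [Hdf Hf_est]].
  destruct (Hcont df Hdf) as [dc [Hdc Hclose]].
  destruct (Hg e2 He2) as [dg [Hdg Hg_est]].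
  exists (Rmin dc dg). split; [now apply Rmin_pos|].
  intros s Hs Hwin Hadm.
  pose proof (Rmin_l dc dg). pose proof (Rmin_r dc dg).
  assert (Hgs : Rabs (g s - g t) < df) by (apply Hclose; [tauto | lra]).
  apply Rabs_def2 in Hgs.
  assert (HfX := Hf_est (g s) (HgS s Hs) ltac:(lra) (or_introl inQ_1)).
  rewrite Hrho, powQ_1, pow_nn_1 in HfX by apply Rabs_pos.
  assert (HgX := Hg_est s Hs ltac:(lra) Hadm).
  rewrite <- Rabs_powQ in HgX |- *.
  eapply Rle_trans.
  - apply (Rabs_chain_bound (g (rho T t) - g s)) with (e1 := e1) (e2 := e2);
      [lra | exact HfX | exact HgX].
  - apply Rmult_le_compat_r; [apply Rabs_pos | exact Hsum].
Qed.

Theorem mainTheorem8 (T : R -> Prop) (alpha : R) (g f Df : R -> R) (t Lg : R) :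
  time_scale T ->
  0 < alpha <= 1 ->
  (forall x y, T x -> T y -> x < y -> g x < g y) ->
  time_scale (range_on T g) ->
  Sk T t ->
  nabla_frac T alpha g t Lg ->
  (forall x, Sk (range_on T g) x -> nabla_frac (range_on T g) 1 f x (Df x)) ->
  (forall x, Sk (range_on T g) x -> forall eps, 0 < eps -> exists delta, 0 < delta /\
     forall y, Sk (range_on T g) y -> Rabs (y - x) < delta ->
       Rabs (Df y - Df x) < eps) ->
  nabla_frac T alpha (fun x => f (g x)) t (Df (g t) * Lg).
Proof.
  intros [_ T_closed] [alpha_pos _] g_incr _ HSk Hg Hf _.
  apply nabla_frac_iff in Hg as [_ Hg].
  apply nabla_frac_iff. split; [exact HSk|].
  assert (T_t : T t) by apply HSk.
  destruct (classic (inQ alpha \/ left_dense T t)) as [Hadm|Hvacuous];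
    [|apply nabla_bound_vacuous; tauto].
  assert (Hcont : continuous_within (fun s => T s /\ (inQ alpha \/ s < t)) g t)
    by (apply (nabla_bound_continuous _ _ _ _ Lg);
        [exact alpha_pos | now apply nabla_bound_center | exact Hg]).
  assert (Hrho : rho (range_on T g) (g t) = g (rho T t)).
  { apply rho_range; [exact g_incr | exact T_t | exact T_closed|].
    apply (continuous_within_sub _ _ _ _ Hcont). tauto. }
  assert (HSk_range : Sk (range_on T g) (g t)).
  { apply Sk_range; [exact g_incr | exact T_t | exact HSk|].
    intros Tmin. apply (continuous_within_sub _ _ _ _ Hcont). intros s [Hs Hts].
    split; [exact Hs|]. destruct Hadm as [Ha|Hdense]; [now left|].
    destruct (Hdense 1 Rlt_0_1) as [s' [Hs' Hs't]]. pose proof (Tmin s' Hs'). lra. }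
  apply (nabla_bound_comp T (range_on T g)); [| exact Hrho | exact Hcont | exact Hg |].
  - intros s Hs. now exists s.
  - now apply nabla_frac_iff, Hf.
Qed.
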